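(* Let $(X,d,f)$ be a dynamical system where $X$ is uniformly locally compact. Then $(X,d,f)$ has the shadowing property if and only if it has the finite shadowing property.
   Context: A dynamical system $(X,d,f)$ is a separable metric space with continuous $f:X\to X$. $(X,d)$ is uniformly locally compact if there is $\varepsilon>0$ such that for every $x\in X$ the open ball of radius $\varepsilon$ centered at $x$ is contained in a compact set. A $\delta$-pseudo-orbit is a finite or infinite sequence $(x_n)$ with $d(f(x_n),x_{n+1})<\delta$; $x$ $\varepsilon$-shadows it if $d(f^n(x),x_n)<\varepsilon$ for all indices. Finite shadowing property: for every $\varepsilon>0$ there is $\delta>0$ such that every finite $\delta$-pseudo-orbit is $\varepsilon$-shadowed by some point; shadowing property: same for infinite pseudo-orbits. *)

From Stdlib Require Import Reals List.
Open Scope R_scope.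

Section MetricDefs.
Context {X : Type}.

Definition is_metric (d : X -> X -> R) : Prop :=
  (forall x y, 0 <= d x y) /\
  (forall x y, d x y = 0 <-> x = y) /\
  (forall x y, d x y = d y x) /\
  (forall x y z, d x z <= d x y + d y z).

Definition open_set (d : X -> X -> R) (U : X -> Prop) : Prop :=
  forall x, U x -> exists r, 0 < r /\ forall y, d x y < r -> U y.

Definition compact_set (d : X -> X -> R) (K : X -> Prop) : Prop :=
  forall (I : Type) (U : I -> X -> Prop),
    (forall i, open_set d (U i)) ->
    (forall x, K x -> exists i, U i x) ->
    exists l : list I, forall x, K x -> exists i, In i l /\ U i x.

Definition separable (d : X -> X -> R) : Prop :=
  exists (D : X -> Prop) (g : X -> nat),
    (forall x y, D x -> D y -> g x = g y -> x = y) /\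
    (forall x eps, 0 < eps -> exists y, D y /\ d x y < eps).

Definition continuous_map (d : X -> X -> R) (f : X -> X) : Prop :=
  forall x eps, 0 < eps -> exists delta, 0 < delta /\
    forall y, d x y < delta -> d (f x) (f y) < eps.

Definition dynamical_system (d : X -> X -> R) (f : X -> X) : Prop :=
  is_metric d /\ separable d /\ continuous_map d f.

Definition uniformly_locally_compact (d : X -> X -> R) : Prop :=
  exists eps, 0 < eps /\ forall x, exists K : X -> Prop,
    compact_set d K /\ forall y, d x y < eps -> K y.

Definition finite_pseudo_orbit (d : X -> X -> R) (f : X -> X) (delta : R)
  (n : nat) (xs : nat -> X) : Prop :=
  forall i, (i < n)%nat -> d (f (xs i)) (xs (S i)) < delta.

Definition pseudo_orbit (d : X -> X -> R) (f : X -> X) (delta : R)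
  (xs : nat -> X) : Prop :=
  forall i, d (f (xs i)) (xs (S i)) < delta.

Definition finite_shadows (d : X -> X -> R) (f : X -> X) (eps : R)
  (x : X) (n : nat) (xs : nat -> X) : Prop :=
  forall i, (i <= n)%nat -> d (Nat.iter i f x) (xs i) < eps.

Definition shadows (d : X -> X -> R) (f : X -> X) (eps : R)
  (x : X) (xs : nat -> X) : Prop :=
  forall i, d (Nat.iter i f x) (xs i) < eps.

Definition finite_shadowing_property (d : X -> X -> R) (f : X -> X) : Prop :=
  forall eps, 0 < eps -> exists delta, 0 < delta /\
    forall n xs, finite_pseudo_orbit d f delta n xs ->
      exists x, finite_shadows d f eps x n xs.

Definition shadowing_property (d : X -> X -> R) (f : X -> X) : Prop :=
  forall eps, 0 < eps -> exists delta, 0 < delta /\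
    forall xs, pseudo_orbit d f delta xs ->
      exists x, shadows d f eps x xs.

End MetricDefs.

(** A true orbit shadowing an infinite pseudo-orbit shadows each of its finite
    segments, and a finite pseudo-orbit continued by the true orbit of its last
    point is an infinite one; this gives one direction.  Conversely, the points
    [e]-shadowing the first [n] steps of an infinite pseudo-orbit all lie in the
    [e]-ball around its initial point, hence in a fixed compact set once [e] is
    below the radius of uniform local compactness.  A cluster point of these
    finite shadowing points shadows the whole pseudo-orbit by continuity of
    the iterates of [f]. *)

From Stdlib Require Import Reals.
From Stdlib Require Import Lra Lia List Classical.
Open Scope R_scope.

Section Shadowing.

Context {X : Type} (d : X -> X -> R) (f : X -> X).
Hypothesis metric_d : is_metric d.

Let dist_xx x : d x x = 0 := proj2 (proj1 (proj2 metric_d) x x) eq_refl.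
Let distC x y : d x y = d y x := proj1 (proj2 (proj2 metric_d)) x y.
Let dist_triangle x y z : d x z <= d x y + d y z := proj2 (proj2 (proj2 metric_d)) x y z.

Definition extend_by_orbit (n : nat) (xs : nat -> X) (i : nat) : X :=
  if Nat.leb i n then xs i else Nat.iter (i - n) f (xs n).

Lemma pseudo_orbit_extend_by_orbit delta n xs :
  0 < delta -> finite_pseudo_orbit d f delta n xs ->
  pseudo_orbit d f delta (extend_by_orbit n xs).
Proof.
  intros delta_gt0 pseudo_xs i; unfold extend_by_orbit.
  destruct (Nat.leb_spec i n) as [le_in | lt_ni];
    destruct (Nat.leb_spec (S i) n) as [lt_in | le_Sin].
  - apply pseudo_xs; lia.
  - replace i with n by lia; rewrite Nat.sub_succ_l, Nat.sub_diag by lia.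
    simpl; rewrite dist_xx; exact delta_gt0.
  - lia.
  - rewrite Nat.sub_succ_l by lia; simpl; rewrite dist_xx; exact delta_gt0.
Qed.

Lemma shadowing_finite_shadowing :
  shadowing_property d f -> finite_shadowing_property d f.
Proof.
  intros shadowing eps eps_gt0.
  destruct (shadowing eps eps_gt0) as (delta & delta_gt0 & shadow).
  exists delta; split; [exact delta_gt0 |].
  intros n xs pseudo_xs.
  destruct (shadow (extend_by_orbit n xs)) as [x shadow_x].
  { now apply pseudo_orbit_extend_by_orbit. }
  exists x; intros i le_in.
  specialize (shadow_x i); unfold extend_by_orbit in shadow_x.
  now rewrite (proj2 (Nat.leb_le i n) le_in) in shadow_x.
Qed.

Definition cluster_point (P : nat -> X -> Prop) (y : X) : Prop :=
  forall eta, 0 < eta -> forall N, exists n z, (N <= n)%nat /\ P n z /\ d z y < eta.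

Lemma compact_cluster_point (K : X -> Prop) (P : nat -> X -> Prop) :
  compact_set d K -> (forall n, exists z, P n z) -> (forall n z, P n z -> K z) ->
  exists y, cluster_point P y.
Proof.
  intros compact_K P_inhabited P_sub_K.
  apply NNPP; intro no_cluster.
  set (avoids c eta N := forall n w, (N <= n)%nat -> P n w -> eta <= d w c).
  set (U (i : X * R * nat) z :=
         let '(c, eta, N) := i in d c z < eta /\ avoids c eta N).
  destruct (compact_K _ U) as [l subcover].
  - intros [[c eta] N] z [dist_cz avoids_c].
    exists (eta - d c z); split; [lra |].
    intros w dist_zw; split; [| exact avoids_c].
    specialize (dist_triangle c z w); lra.
  - intros y _.
    assert (exists eta N, 0 < eta /\ avoids y eta N) as (eta & N & eta_gt0 & avoids_y).
    { apply NNPP; intro near_y; apply no_cluster; exists y.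
      intros eta eta_gt0 N; apply NNPP; intro far_y; apply near_y.
      exists eta, N; split; [exact eta_gt0 |].
      intros n w le_Nn Pw; apply Rnot_lt_le; intro close.
      apply far_y; now exists n, w. }
    exists (y, eta, N); simpl; rewrite dist_xx; now split.
  - set (M := list_max (map (fun i : X * R * nat => snd i) l)).
    destruct (P_inhabited M) as [z Pz].
    destruct (subcover z (P_sub_K _ _ Pz)) as ([[c eta] N] & in_l & dist_cz & avoids_c).
    assert (le_NM : (N <= M)%nat).
    { assert (bound := proj1 (list_max_le _ M) (le_n M)).
      rewrite Forall_forall in bound.
      exact (bound _ (in_map (fun i : X * R * nat => snd i) _ _ in_l)). }
    specialize (avoids_c M z le_NM Pz); rewrite distC in avoids_c; lra.
Qed.

Hypothesis continuous_f : continuous_map d f.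

Lemma continuous_iter i x eps : 0 < eps -> exists delta, 0 < delta /\
  forall z, d x z < delta -> d (Nat.iter i f x) (Nat.iter i f z) < eps.
Proof.
  revert eps; induction i as [| i IH]; intros eps eps_gt0.
  - now exists eps.
  - destruct (continuous_f (Nat.iter i f x) eps eps_gt0) as (eta & eta_gt0 & cont_f).
    destruct (IH eta eta_gt0) as (delta & delta_gt0 & cont_iter).
    exists delta; split; [exact delta_gt0 |].
    intros z dist_xz; apply cont_f, cont_iter, dist_xz.
Qed.

Lemma cluster_point_shadows e e' xs y :
  e < e' -> cluster_point (fun n z => finite_shadows d f e z n xs) y ->
  shadows d f e' y xs.
Proof.
  intros lt_ee' cluster_y i.
  destruct (continuous_iter i y (e' - e)) as (eta & eta_gt0 & cont_iter); [lra |].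
  destruct (cluster_y eta eta_gt0 i) as (n & z & le_in & shadow_z & dist_zy).
  rewrite distC in dist_zy.
  specialize (cont_iter z dist_zy); specialize (shadow_z i le_in).
  specialize (dist_triangle (Nat.iter i f y) (Nat.iter i f z) (xs i)); lra.
Qed.

Lemma finite_shadowing_shadowing :
  uniformly_locally_compact d ->
  finite_shadowing_property d f -> shadowing_property d f.
Proof.
  intros (r & r_gt0 & locally_compact) finite_shadowing eps eps_gt0.
  set (e := Rmin (eps / 2) r).
  assert (e_gt0 : 0 < e) by (unfold e; apply Rmin_glb_lt; lra).
  assert (lt_e_eps : e < eps) by (unfold e; pose proof (Rmin_l (eps / 2) r); lra).
  assert (le_e_r : e <= r) by apply Rmin_r.
  destruct (finite_shadowing e e_gt0) as (delta & delta_gt0 & shadow).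
  exists delta; split; [exact delta_gt0 |].
  intros xs pseudo_xs.
  destruct (locally_compact (xs 0%nat)) as (K & compact_K & ball_sub_K).
  destruct (compact_cluster_point K (fun n z => finite_shadows d f e z n xs))
    as [y cluster_y].
  - exact compact_K.
  - intro n; apply shadow; intros i _; apply pseudo_xs.
  - intros n z shadow_z; apply ball_sub_K.
    specialize (shadow_z 0%nat (Nat.le_0_l n)); simpl in shadow_z.
    rewrite distC; lra.
  - exists y; exact (cluster_point_shadows e eps xs y lt_e_eps cluster_y).
Qed.

End Shadowing.

Theorem proposition2p16 (X : Type) (d : X -> X -> R) (f : X -> X) :
  dynamical_system d f ->
  uniformly_locally_compact d ->
  (shadowing_property d f <-> finite_shadowing_property d f).
Proof.
  intros (metric_d & _ & continuous_f) locally_compact; split.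
  - exact (shadowing_finite_shadowing d f metric_d).
  - exact (finite_shadowing_shadowing d f metric_d continuous_f locally_compact).
Qed.
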